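(* Let $D$ be an integral domain of characteristic zero. Suppose that every $D$-algebra endomorphism of $A_1(D)$ is an automorphism of $A_1(D)$. Then for all $A,B,w\in A_1(D)$ with $[A,B]\in D^*$ and $[A,w]=0$, one has $w\in D[A]$.
   Context: For a commutative ring $R$, the first Weyl algebra $A_1(R)$ is the unital associative $R$-algebra generated by $X,Y$ subject to $[Y,X]=YX-XY=1$; it is a free $R$-module with basis $\{X^iY^j\}_{i,j\ge0}$. $[P,Q]=PQ-QP$. $D^*$ is the group of units of $D$. $D[A]$ denotes the $D$-subalgebra of $A_1(D)$ generated by $A$. *)

From HB Require Import structures.
From mathcomp Require Import all_boot all_order all_algebra.
Set Implicit Arguments. Unset Strict Implicit. Unset Printing Implicit Defensive.
Import Order.TTheory GRing.Theory Num.Theory.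
Local Open Scope ring_scope.

Definition comm_br (W : pzRingType) (P Q : W) : W := P * Q - Q * P.

(* Monomial-expansion map: a coefficient family (c_{ij}), encoded as a
   polynomial in polynomials p with c_{ij} = (p`_i)`_j, is sent to
   \sum_{i,j} c_{ij} X^i Y^j. *)
Definition weyl_expand (D : comNzRingType) (W : algType D) (X Y : W)
    (p : {poly {poly D}}) : W :=
  \sum_(i < size p) \sum_(j < size p`_i) (p`_i)`_j *: (X ^+ i * Y ^+ j).

(* W together with X, Y is (a copy of) the first Weyl algebra A_1(D):
   the unital associative D-algebra generated by X, Y subject to
   YX - XY = 1, free as a D-module on the basis {X^i Y^j}. *)
Definition is_weyl_algebra (D : comNzRingType) (W : algType D) (X Y : W) : Prop :=
  comm_br Y X = 1 /\ bijective (weyl_expand X Y).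

Definition alg_endo (D : comNzRingType) (W : algType D) (f : W -> W) : Prop :=
  linear f /\ monoid_morphism f.

Definition in_subalg1 (D : comNzRingType) (W : algType D) (A w : W) : Prop :=
  exists p : {poly D}, w = \sum_(i < size p) p`_i *: A ^+ i.

From HB Require Import structures.
From mathcomp Require Import all_boot all_order all_algebra.
Import GRing.Theory.
Set Implicit Arguments. Unset Strict Implicit. Unset Printing Implicit Defensive.
Local Open Scope ring_scope.

(* If [A, B] = u is a unit, then X |-> u^-1 B, Y |-> A defines an endomorphism
   f of A_1(D), which by hypothesis is bijective. Writing w = f v, [A, w] = 0
   pulls back to [Y, v] = 0. In the basis X^i Y^j, ad Y acts as d/dX, so in
   characteristic zero v is a polynomial in Y, and hence w = f v is the same
   polynomial in f Y = A. *)

Lemma big_ord_widen0 (V : nmodType) (m n : nat) (F : nat -> V) :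
  (m <= n)%N -> (forall j, (m <= j < n)%N -> F j = 0) ->
  \sum_(j < m) F j = \sum_(j < n) F j.
Proof.
move=> le_mn F0; rewrite (big_ord_widen n F le_mn).
rewrite [RHS](bigID (fun j : 'I_n => j < m)%N) /= [X in _ = _ + X]big1 ?addr0 // => j.
by rewrite -leqNgt => le_mj; apply: F0; rewrite le_mj /=.
Qed.

Lemma deriv_eq0_polyC (R : idomainType) (p : {poly R}) :
  [pchar R] =i pred0 -> p^`() = 0 -> p = (p`_0)%:P.
Proof.
move=> /pcharf0P pchar0 dp0; apply: size1_polyC; apply/leq_sizeP => -[//|i] _.
have /eqP := congr1 (fun q : {poly R} => q`_i) dp0.
by rewrite coef_deriv coef0 -mulr_natr mulf_eq0 pchar0 orbF => /eqP.
Qed.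

Section WeylExpand.
Variables (D : comNzRingType) (W : algType D) (X Y : W).
Implicit Types (p q : {poly {poly D}}).

Local Notation E := (weyl_expand X Y).

Definition ysize p : nat := \max_(i < size p) size (p`_i)%R.

Lemma coef_ysize p i j : (size p <= i)%N || (ysize p <= j)%N -> (p`_i)`_j = 0.
Proof.
case: (ltnP i (size p)) => [lt_ip /= le_yj|le_pi _].
  apply: nth_default; apply: leq_trans le_yj.
  exact: (@leq_bigmax_cond _ xpredT (fun i : 'I_(size p) => size (p`_i)%R) (Ordinal lt_ip)).
by rewrite (nth_default _ le_pi) coef0.
Qed.

Lemma weyl_expand_bounded p N M :
  (forall i j, (N <= i)%N || (M <= j)%N -> (p`_i)`_j = 0) ->
  E p = \sum_(i < N) \sum_(j < M) (p`_i)`_j *: (X ^+ i * Y ^+ j).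
Proof.
move=> p0.
have le_pN : (size p <= N)%N.
  by apply/leq_sizeP => i le_Ni; apply/polyP => j; rewrite coef0 p0 ?le_Ni.
have le_piM i : (size (p`_i)%R <= M)%N.
  by apply/leq_sizeP => j le_Mj; rewrite p0 ?le_Mj ?orbT.
rewrite /weyl_expand (big_ord_widen0
    (F := fun i => \sum_(j < size p`_i) (p`_i)`_j *: (X ^+ i * Y ^+ j)) le_pN); last first.
  by move=> i /andP[le_pi _]; rewrite nth_default // size_poly0 big_ord0.
apply: eq_bigr => i _.
rewrite (big_ord_widen0 (F := fun j => (p`_i)`_j *: (X ^+ i * Y ^+ j)) (le_piM i)) //.
by move=> j /andP[le_j _]; rewrite nth_default ?scale0r.
Qed.

Lemma weyl_expandE p :
  E p = \sum_(i < size p) \sum_(j < ysize p) (p`_i)`_j *: (X ^+ i * Y ^+ j).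
Proof. exact/weyl_expand_bounded/coef_ysize. Qed.

Lemma weyl_expand_linear (c : D) p q : E (c%:P *: p + q) = c *: E p + E q.
Proof.
pose N := maxn (size p) (size q); pose M := maxn (ysize p) (ysize q).
have coef_supp (r : {poly {poly D}}) : (size r <= N)%N -> (ysize r <= M)%N ->
    forall i j, (N <= i)%N || (M <= j)%N -> (r`_i)`_j = 0.
  move=> le_rN le_rM i j /orP[le_Ni|le_Mj]; apply: coef_ysize.
    by rewrite (leq_trans le_rN).
  by rewrite (leq_trans le_rM) ?orbT.
have p0 := coef_supp p (leq_maxl _ _) (leq_maxl _ _).
have q0 := coef_supp q (leq_maxr _ _) (leq_maxr _ _).
rewrite (weyl_expand_bounded p0) (weyl_expand_bounded q0).
rewrite (@weyl_expand_bounded _ N M); last first.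
  by move=> i j ij; rewrite coefD coefZ coefD coefCM p0 // q0 // mulr0 addr0.
rewrite scaler_sumr -big_split; apply: eq_bigr => i _.
rewrite scaler_sumr -big_split; apply: eq_bigr => j _.
by rewrite coefD coefZ coefD coefCM scalerDl scalerA.
Qed.

Lemma weyl_expand0 : E 0 = 0.
Proof. by rewrite /weyl_expand size_poly0 big_ord0. Qed.

Lemma weyl_expandD p q : E (p + q) = E p + E q.
Proof. by have := weyl_expand_linear 1 p q; rewrite polyC1 !scale1r. Qed.

Lemma weyl_expand1 : E 1 = 1.
Proof.
rewrite (@weyl_expand_bounded _ 1 1) ?big_ord1 ?coefC /= ?coefC /= ?scale1r ?mulr1 //.
by move=> [|i] [|j] //= _; rewrite coefC //= coefC.
Qed.

Lemma weyl_expandC (q : {poly D}) : E q%:P = \sum_(j < size q) q`_j *: Y ^+ j.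
Proof.
rewrite (@weyl_expand_bounded _ 1 (size q)) ?big_ord1; last first.
  by move=> [|i] j /= le_j; rewrite coefC /= ?coef0 // nth_default.
by apply: eq_bigr => j _; rewrite coefC /= mul1r.
Qed.

Lemma mulX_weyl_expand p : X * E p = E (p * 'X).
Proof.
rewrite weyl_expandE (@weyl_expand_bounded _ (size p).+1 (ysize p)); last first.
  by move=> [|i] j ij; rewrite coefMX ?coef0 //= coef_ysize.
rewrite big_ord_recl coefMX /= [X in _ = X + _]big1 ?add0r => [|j _]; last first.
  by rewrite coef0 scale0r.
rewrite mulr_sumr; apply: eq_bigr => i _; rewrite mulr_sumr; apply: eq_bigr => j _.
by rewrite coefMX /= exprS -mulrA -scalerAr.
Qed.

Lemma weyl_expand_mulY p : E p * Y = E (p * 'X%:P).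
Proof.
rewrite weyl_expandE (@weyl_expand_bounded _ (size p) (ysize p).+1); last first.
  by move=> i [|j] ij; rewrite coefMC coefMX //= coef_ysize.
rewrite mulr_suml; apply: eq_bigr => i _.
rewrite big_ord_recl coefMC coefMX /= scale0r add0r mulr_suml; apply: eq_bigr => j _.
by rewrite coefMX /= exprSr -scalerAl mulrA.
Qed.

Hypothesis commYX : comm_br Y X = 1.

Lemma mulY_Xn i : Y * X ^+ i = X ^+ i * Y + X ^+ i.-1 *+ i.
Proof.
have YX : Y * X = X * Y + 1 by rewrite -commYX /comm_br addrC subrK.
elim: i => [|i IH]; first by rewrite expr0 mul1r mulr1 mulr0n addr0.
rewrite exprSr mulrA IH mulrDl -mulrA YX mulrDr mulr1 mulrA -exprSr.
case: i {IH} => [|i] /=; first by rewrite mulr0n mul0r expr0 addr0.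
by rewrite mulrnAl -exprSr -addrA -mulrS.
Qed.

(* In the monomial basis ad Y is the formal derivative in the X-variable,
   since [Y, X^i Y^j] = i X^(i-1) Y^j. *)
Lemma mulY_weyl_expand p : Y * E p = E p * Y + E p^`().
Proof.
have p0 i j : ((size p).+1 <= i)%N || (ysize p <= j)%N -> (p`_i)`_j = 0.
  by move=> /orP[/ltnW le_i|le_j]; rewrite coef_ysize ?le_i ?le_j ?orbT.
have dp0 i j : (size p <= i)%N || (ysize p <= j)%N -> (p^`()`_i)`_j = 0.
  by move=> ij; rewrite coef_deriv coefMn p0 ?mul0rn // -addn1 leq_add2r.
have -> : E p^`() = \sum_(i < (size p).+1) \sum_(j < ysize p)
    ((p`_i)`_j *+ i) *: (X ^+ i.-1 * Y ^+ j).
  rewrite (weyl_expand_bounded dp0) [RHS]big_ord_recl /= [X in _ = X + _]big1 ?add0r.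
    by apply: eq_bigr => i _; apply: eq_bigr => j _; rewrite coef_deriv coefMn.
  by move=> j _; rewrite mulr0n scale0r.
rewrite (weyl_expand_bounded p0) mulr_sumr mulr_suml -big_split; apply: eq_bigr => i _.
rewrite mulr_sumr mulr_suml -big_split; apply: eq_bigr => j _.
rewrite -scalerAr -scalerAl mulrA mulY_Xn mulrDl scalerDr.
by rewrite -scalerMnl mulrnAl -scalerMnr -!mulrA -exprS -exprSr.
Qed.

Lemma comm_br_weyl_expand p : comm_br Y (E p) = E p^`().
Proof. by rewrite /comm_br mulY_weyl_expand addrAC subrr add0r. Qed.

End WeylExpand.

Section AlgMorphism.
Variables (D : comNzRingType) (W W' : algType D) (f : W -> W').
Hypotheses (f_linear : linear f) (f_monoid : monoid_morphism f).

HB.instance Definition _ := GRing.isLinear.Build D W W' *:%R f f_linear.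
HB.instance Definition _ := GRing.isMonoidMorphism.Build W W' f f_monoid.

Lemma alg_morph_comm_br a b : f (comm_br a b) = comm_br (f a) (f b).
Proof. by rewrite /comm_br rmorphB !rmorphM. Qed.

Lemma alg_morph_comm_br0 a b :
  injective f -> comm_br (f a) (f b) = 0 -> comm_br a b = 0.
Proof. by move=> f_inj; rewrite -alg_morph_comm_br -(raddf0 f) => /f_inj. Qed.

Lemma alg_morph_subalg1 a x : in_subalg1 a x -> in_subalg1 (f a) (f x).
Proof.
case=> q ->; exists q; rewrite linear_sum.
by apply: eq_bigr => i _; rewrite linearZ rmorphXn.
Qed.

End AlgMorphism.

Section WeylLift.
Variables (D : comNzRingType) (W W' : algType D) (X Y : W) (X' Y' : W').
Variable coords : W -> {poly {poly D}}.
Hypotheses (coordsK : cancel coords (weyl_expand X Y))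
           (expandK : cancel (weyl_expand X Y) coords).
Hypotheses (commYX : comm_br Y X = 1) (commYX' : comm_br Y' X' = 1).

Definition weyl_lift (a : W) : W' := weyl_expand X' Y' (coords a).

Lemma coords_linear (c : D) a b : coords (c *: a + b) = c%:P *: coords a + coords b.
Proof. by apply: (can_inj expandK); rewrite weyl_expand_linear !coordsK. Qed.

Lemma weyl_lift_linear : linear weyl_lift.
Proof. by move=> c a b; rewrite /weyl_lift coords_linear weyl_expand_linear. Qed.

HB.instance Definition _ := GRing.isLinear.Build D W W' *:%R weyl_lift weyl_lift_linear.

Lemma weyl_lift_mulX a : weyl_lift (X * a) = X' * weyl_lift a.
Proof.
by rewrite /weyl_lift -{1}[a]coordsK mulX_weyl_expand expandK -mulX_weyl_expand.
Qed.

Lemma weyl_lift_mulY a : weyl_lift (Y * a) = Y' * weyl_lift a.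
Proof.
rewrite /weyl_lift -{1}[a]coordsK mulY_weyl_expand // weyl_expand_mulY -weyl_expandD expandK.
by rewrite weyl_expandD -weyl_expand_mulY -mulY_weyl_expand.
Qed.

Lemma weyl_lift1 : weyl_lift 1 = 1.
Proof. by rewrite /weyl_lift -(weyl_expand1 X Y) expandK weyl_expand1. Qed.

Lemma weyl_liftY : weyl_lift Y = Y'.
Proof. by rewrite -[Y]mulr1 weyl_lift_mulY weyl_lift1 mulr1. Qed.

Lemma weyl_lift_monoid : monoid_morphism weyl_lift.
Proof.
split=> [|a b]; first exact: weyl_lift1.
have liftM i j c : weyl_lift (X ^+ i * Y ^+ j * c) = X' ^+ i * Y' ^+ j * weyl_lift c.
  rewrite -!mulrA; elim: i => [|i IHi]; last by rewrite !exprS -!mulrA weyl_lift_mulX IHi.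
  rewrite !expr0 !mul1r; elim: j => [|j IHj]; first by rewrite !expr0 !mul1r.
  by rewrite !exprS -!mulrA weyl_lift_mulY IHj.
have -> : weyl_lift a = weyl_expand X' Y' (coords a) by [].
rewrite -{1}[a]coordsK !weyl_expandE !mulr_suml linear_sum.
apply: eq_bigr => i _; rewrite !mulr_suml linear_sum; apply: eq_bigr => j _.
by rewrite -!scalerAl linearZ /= liftM.
Qed.

End WeylLift.

Section Centralizer.
Variables (D : idomainType) (W : algType D) (X Y : W).
Variable coords : W -> {poly {poly D}}.
Hypotheses (coordsK : cancel coords (weyl_expand X Y))
           (expandK : cancel (weyl_expand X Y) coords).
Hypotheses (pchar0 : [pchar D] =i pred0) (commYX : comm_br Y X = 1).

Lemma centralizer_weylY v : comm_br Y v = 0 -> in_subalg1 Y v.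
Proof.
rewrite -[v]coordsK comm_br_weyl_expand // -(weyl_expand0 X Y) => /(can_inj expandK).
move=> /deriv_eq0_polyC ->; last by move=> n; rewrite pchar_poly pchar0.
by exists (coords v)`_0; rewrite weyl_expandC.
Qed.

End Centralizer.

Unset Implicit Arguments.

Theorem theorem4p8 (D : idomainType) (W : algType D) (X Y : W) :
  [pchar D] =i pred0 ->
  is_weyl_algebra X Y ->
  (forall f : W -> W, alg_endo f -> bijective f) ->
  forall A B w : W,
    (exists2 u : D, u \is a GRing.unit & comm_br A B = u%:A) ->
    comm_br A w = 0 ->
    in_subalg1 A w.
Proof.
move=> pchar0 [commYX [coords expandK coordsK]] endo_bij A B w [u uU commAB] commAw.
pose X' := u^-1 *: B.
have commAX' : comm_br A X' = 1.
  rewrite /comm_br -scalerAr -scalerAl -scalerBr -/(comm_br A B) commAB.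
  by rewrite scalerA mulVr ?scale1r.
pose f := weyl_lift X' A coords.
have f_linear : linear f := weyl_lift_linear X' A coordsK expandK.
have f_monoid : monoid_morphism f := weyl_lift_monoid coordsK expandK commYX commAX'.
have [g fK gK] := endo_bij f (conj f_linear f_monoid).
have fY : f Y = A := weyl_liftY coordsK expandK commYX commAX'.
have commYv : comm_br Y (g w) = 0.
  by apply: (alg_morph_comm_br0 f_linear f_monoid (can_inj fK)); rewrite fY gK.
have Yv := centralizer_weylY coordsK expandK pchar0 commYX commYv.
by have := alg_morph_subalg1 f_linear f_monoid Yv; rewrite gK fY.
Qed.
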